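(* Let $f(x,y) = \frac{xy}{x+y+1}$ for $x,y\ge0$. Let $a,b$ be nonnegative random variables, $\rho>0$ and $r\in\mathbb R$. Then $$\Pr\bigl(f(\rho a,\rho b)\le\rho^{2r}\bigr) \le \Pr\Bigl(\min(a,b)\le \rho^{2r-1}+\rho^{r-1}\sqrt{1+\rho^{2r}}\Bigr).$$ *)

From HB Require Import structures.
From mathcomp Require Import all_boot all_order all_algebra.
From mathcomp Require Import all_classical all_reals all_analysis.
Set Implicit Arguments. Unset Strict Implicit. Unset Printing Implicit Defensive.
Import Order.TTheory GRing.Theory Num.Theory.
Local Open Scope ring_scope.

Definition fxy {R : realType} (x y : R) : R := x * y / (x + y + 1).

From HB Require Import structures.
From mathcomp Require Import all_boot all_order all_algebra.
From mathcomp Require Import all_classical all_reals all_analysis.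
From mathcomp Require Import lra measurable_realfun.
Import Order.TTheory GRing.Theory Num.Theory.
Local Open Scope classical_set_scope.
Local Open Scope ring_scope.

(* Pointwise, [fxy x y <= c] with [c >= 0] forces [min x y <= fxy_threshold c];
   for [c = rho^(2r)] the bound in the second event is exactly
   [fxy_threshold c / rho], so the first event is contained in the second. *)

Section fxy_threshold.
Context {R : realType}.
Implicit Types x y c : R.

(* The positive solution [t] of [t ^+ 2 = c * (2 t + 1)], i.e. of [fxy t t = c]. *)
Definition fxy_threshold c : R := c + Num.sqrt (c * (1 + c)).

Lemma fxy_le x y c : 0 <= x -> 0 <= y ->
  (fxy x y <= c) = (x * y <= c * (x + y + 1)).
Proof. by move=> x0 y0; rewrite /fxy ler_pdivrMr //; lra. Qed.

Lemma min_le_fxy_threshold x y c : 0 <= c -> fxy x y <= c ->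
  Num.min x y <= fxy_threshold c.
Proof.
rewrite /fxy_threshold; set s := Num.sqrt _ => c0.
apply: contraTT; rewrite -ltNge lt_min => /andP[ltx lty].
have s0 : 0 <= s by exact: sqrtr_ge0.
have s2 : s * s = c * (1 + c) by rewrite -expr2 sqr_sqrtr // mulr_ge0 //; lra.
(* [(x - c) (y - c) > s^2 = c (1 + c)] is [x y > c (x + y + 1)]. *)
have : s * s < (x - c) * (y - c) by apply: ltr_pM => //; lra.
rewrite s2 fxy_le -?ltNge; lra.
Qed.

Lemma mulr_powRB1 x y : 0 < x -> x * x `^ (y - 1) = x `^ y.
Proof.
move=> x0; rewrite -{1}(powRr1 (ltW x0)) -powRD ?(gt_eqF x0) ?implybT //.
by rewrite addrC subrK.
Qed.

Lemma sqrt_powR2 x y : 0 <= x -> Num.sqrt (x `^ (2 * y)) = x `^ y.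
Proof.
move=> x0; rewrite mulrC powRrM powR_mulrn ?powR_ge0 //.
by rewrite sqrtr_sqr ger0_norm // powR_ge0.
Qed.

Lemma powR_fxy_threshold rho r : 0 < rho ->
  rho * (rho `^ (2 * r - 1) + rho `^ (r - 1) * Num.sqrt (1 + rho `^ (2 * r)))
  = fxy_threshold (rho `^ (2 * r)).
Proof.
move=> rho0; rewrite mulrDr mulrA !mulr_powRB1 // /fxy_threshold.
by rewrite sqrtrM ?powR_ge0 // sqrt_powR2 // ltW.
Qed.

End fxy_threshold.

Theorem lemma4 (d : measure_display) (T : measurableType d) (R : realType)
  (P : probability T R) (a b : T -> R)
  (ma : measurable_fun setT a) (mb : measurable_fun setT b)
  (ha : forall t, 0 <= a t) (hb : forall t, 0 <= b t)
  (rho : R) (hrho : 0 < rho) (r : R) :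
  (P [set t | (fxy (rho * a t) (rho * b t) <= rho `^ (2 * r))%R]
   <= P [set t | (Num.min (a t) (b t) <=
          rho `^ (2 * r - 1) + rho `^ (r - 1) * Num.sqrt (1 + rho `^ (2 * r)))%R])%E.
Proof.
have rhoa t : 0 <= rho * a t by rewrite mulr_ge0 // ltW.
have rhob t : 0 <= rho * b t by rewrite mulr_ge0 // ltW.
have mrhoa : measurable_fun setT (fun t => rho * a t) by exact: measurable_funM.
have mrhob : measurable_fun setT (fun t => rho * b t) by exact: measurable_funM.
apply: le_measure; rewrite ?inE.
- under eq_set do rewrite fxy_le //.
  rewrite -[X in measurable X]setTI; apply: measurable_fun_le => //.
    exact: measurable_funM.
  by apply: measurable_funM => //; do 2 apply: measurable_funD => //.
- rewrite -[X in measurable X]setTI; apply: measurable_fun_le => //.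
  exact: measurable_minr.
move=> t /= /(min_le_fxy_threshold _ _ _ (powR_ge0 _ _)).
by rewrite -powR_fxy_threshold // -minr_pMr ?(ltW hrho) // ler_pM2l.
Qed.
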